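(* Let $\mathcal{P}=((\mathcal{S},\mathcal{T}),(\mathcal{U},\mathcal{V}))$ be a twin cotorsion pair on a triangulated category $\mathcal{C}$. Then for every $X\in\mathcal{C}^-$, $\tau^+(X)$ is isomorphic in $\mathcal{C}/\mathcal{W}$ to an object of $\mathcal{H}$, and for every $Y\in\mathcal{C}^+$, $\tau^-(Y)$ is isomorphic in $\mathcal{C}/\mathcal{W}$ to an object of $\mathcal{H}$; i.e. $\tau^+(\mathcal{C}^-/\mathcal{W})\subseteq\mathcal{H}/\mathcal{W}$ and $\tau^-(\mathcal{C}^+/\mathcal{W})\subseteq\mathcal{H}/\mathcal{W}$.
   Context: For full subcategories $\mathcal{X},\mathcal{Y}$, $\mathcal{X}*\mathcal{Y}$ is the full subcategory of objects $C$ admitting a distinguished triangle $X\to C\to Y\to X[1]$ with $X\in\mathcal{X}$, $Y\in\mathcal{Y}$. A cotorsion pair $(\mathcal{A},\mathcal{B})$: full subcategories closed under isomorphisms, finite direct sums and summands with $\mathcal{C}=\mathcal{A}*\mathcal{B}[1]$ and $\mathcal{C}(\mathcal{A},\mathcal{B}[1])=0$. A twin cotorsion pair $((\mathcal{S},\mathcal{T}),(\mathcal{U},\mathcal{V}))$: two cotorsion pairs with $\mathcal{C}(\mathcal{S},\mathcal{V}[1])=0$. Put $\mathcal{W}=\mathcal{U}\cap\mathcal{T}$, $\mathcal{C}^+=\mathcal{W}*\mathcal{V}[1]$, $\mathcal{C}^-=\mathcal{S}[-1]*\mathcal{W}$, $\mathcal{H}=\mathcal{C}^+\cap\mathcal{C}^-$;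 $\mathcal{C}/\mathcal{W}$, $\mathcal{H}/\mathcal{W}$ are ideal quotients by morphisms factoring through objects of $\mathcal{W}$. The inclusion $\mathcal{C}^+/\mathcal{W}\hookrightarrow\mathcal{C}/\mathcal{W}$ has a left adjoint $\tau^+$ and $\mathcal{C}^-/\mathcal{W}\hookrightarrow\mathcal{C}/\mathcal{W}$ has a right adjoint $\tau^-$. *)

From HB Require Import structures.
From mathcomp Require Import all_boot all_algebra.
Set Implicit Arguments. Unset Strict Implicit. Unset Printing Implicit Defensive.
Import GRing.Theory.
Local Open Scope ring_scope.

Record TriCat := {
  Obj : Type;
  Mor : Obj -> Obj -> zmodType;
  idm : forall X, Mor X X;
  comp : forall X Y Z, Mor Y Z -> Mor X Y -> Mor X Z;   (* comp g f = g o f *)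
  compA : forall X Y Z T (h : Mor Z T) (g : Mor Y Z) (f : Mor X Y),
      comp h (comp g f) = comp (comp h g) f;
  comp1m : forall X Y (f : Mor X Y), comp (idm Y) f = f;
  compm1 : forall X Y (f : Mor X Y), comp f (idm X) = f;
  compDl : forall X Y Z (g1 g2 : Mor Y Z) (f : Mor X Y),
      comp (g1 + g2) f = comp g1 f + comp g2 f;
  compDr : forall X Y Z (g : Mor Y Z) (f1 f2 : Mor X Y),
      comp g (f1 + f2) = comp g f1 + comp g f2;
  zobj : Obj;
  zobj_init : forall X (f : Mor zobj X), f = 0;
  zobj_term : forall X (f : Mor X zobj), f = 0;
  bip : Obj -> Obj -> Obj;
  bin1 : forall X Y, Mor X (bip X Y);
  bin2 : forall X Y, Mor Y (bip X Y);
  bpr1 : forall X Y, Mor (bip X Y) X;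
  bpr2 : forall X Y, Mor (bip X Y) Y;
  bip_11 : forall X Y, comp (bpr1 X Y) (bin1 X Y) = idm X;
  bip_22 : forall X Y, comp (bpr2 X Y) (bin2 X Y) = idm Y;
  bip_12 : forall X Y, comp (bpr1 X Y) (bin2 X Y) = 0;
  bip_21 : forall X Y, comp (bpr2 X Y) (bin1 X Y) = 0;
  bip_id : forall X Y, comp (bin1 X Y) (bpr1 X Y) + comp (bin2 X Y) (bpr2 X Y)
                       = idm (bip X Y);
  shift : Obj -> Obj;
  shiftH : forall X Y, Mor X Y -> Mor (shift X) (shift Y);
  shiftH_id : forall X, shiftH (idm X) = idm (shift X);
  shiftH_comp : forall X Y Z (g : Mor Y Z) (f : Mor X Y),
      shiftH (comp g f) = comp (shiftH g) (shiftH f);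
  shiftH_add : forall X Y (f g : Mor X Y), shiftH (f + g) = shiftH f + shiftH g;
  shiftH_inj : forall X Y (f g : Mor X Y), shiftH f = shiftH g -> f = g;
  shiftH_surj : forall X Y (g : Mor (shift X) (shift Y)), exists f, shiftH f = g;
  shift_ess : forall Y, exists X (f : Mor (shift X) Y) (g : Mor Y (shift X)),
      comp g f = idm (shift X) /\ comp f g = idm Y;
  dist : forall X Y Z, Mor X Y -> Mor Y Z -> Mor Z (shift X) -> Prop;
  dist_iso : forall X Y Z X' Y' Z' (u : Mor X Y) (v : Mor Y Z) (w : Mor Z (shift X))
      (u' : Mor X' Y') (v' : Mor Y' Z') (w' : Mor Z' (shift X'))
      (a : Mor X X') (a' : Mor X' X) (b : Mor Y Y') (b' : Mor Y' Y)
      (c : Mor Z Z') (c' : Mor Z' Z),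
      comp a' a = idm X -> comp a a' = idm X' ->
      comp b' b = idm Y -> comp b b' = idm Y' ->
      comp c' c = idm Z -> comp c c' = idm Z' ->
      comp b u = comp u' a -> comp c v = comp v' b ->
      comp (shiftH a) w = comp w' c ->
      dist u v w -> dist u' v' w';
  dist_idm : forall X, dist (idm X) (0 : Mor X zobj) (0 : Mor zobj (shift X));
  dist_ext : forall X Y (u : Mor X Y), exists Z (v : Mor Y Z) (w : Mor Z (shift X)),
      dist u v w;
  dist_rot : forall X Y Z (u : Mor X Y) (v : Mor Y Z) (w : Mor Z (shift X)),
      dist u v w <-> dist v w (- shiftH u);
  dist_morph : forall X Y Z X' Y' Z' (u : Mor X Y) (v : Mor Y Z) (w : Mor Z (shift X))
      (u' : Mor X' Y') (v' : Mor Y' Z') (w' : Mor Z' (shift X'))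
      (a : Mor X X') (b : Mor Y Y'),
      dist u v w -> dist u' v' w' -> comp b u = comp u' a ->
      exists c : Mor Z Z', comp c v = comp v' b /\ comp (shiftH a) w = comp w' c;
  dist_oct : forall X Y Z Z' X' Y' (u : Mor X Y) (j : Mor Y Z') (k : Mor Z' (shift X))
      (v : Mor Y Z) (l : Mor Z X') (i : Mor X' (shift Y))
      (m : Mor Z Y') (n : Mor Y' (shift X)),
      dist u j k -> dist v l i -> dist (comp v u) m n ->
      exists (f : Mor Z' Y') (g : Mor Y' X'),
        dist f g (comp (shiftH j) i) /\
        comp f j = comp m v /\ comp n f = k /\
        comp g m = l /\ comp i g = comp (shiftH u) n
}.

Arguments Mor {_}.
Arguments idm {_} X.
Arguments comp {_ X Y Z}.
Arguments zobj {_}.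
Arguments bip {_}.
Arguments shift {_}.
Arguments shiftH {_ X Y}.
Arguments dist {_ X Y Z}.

Section Defs.
Variable C : TriCat.

Definition subcat := Obj C -> Prop.

Definition is_iso (X Y : Obj C) : Prop :=
  exists (f : Mor X Y) (g : Mor Y X), comp g f = idm X /\ comp f g = idm Y.

Definition good_subcat (P : subcat) : Prop :=
  (forall X Y, is_iso X Y -> P X -> P Y) /\
  P zobj /\ (forall X Y, P X -> P Y -> P (bip X Y)) /\
  (forall X Y, P (bip X Y) -> P X /\ P Y).

(* B[1] and S[-1] as full subcategories (closed under isomorphism) *)
Definition shift_sub (P : subcat) : subcat :=
  fun Y => exists B, P B /\ is_iso Y (shift B).
Definition unshift_sub (P : subcat) : subcat :=
  fun Y => exists S, P S /\ is_iso (shift Y) S.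

Definition star (P Q : subcat) : subcat := fun M =>
  exists X Y (u : Mor X M) (v : Mor M Y) (w : Mor Y (shift X)),
    P X /\ Q Y /\ dist u v w.

Definition cotorsion_pair (A B : subcat) : Prop :=
  good_subcat A /\ good_subcat B /\
  (forall M, star A (shift_sub B) M) /\
  (forall X Y, A X -> B Y -> forall f : Mor X (shift Y), f = 0).

Definition twin_cotorsion_pair (S T U V : subcat) : Prop :=
  cotorsion_pair S T /\ cotorsion_pair U V /\
  (forall X Y, S X -> V Y -> forall f : Mor X (shift Y), f = 0).

Definition capS (P Q : subcat) : subcat := fun X => P X /\ Q X.

(* All definitions below take the whole twin (S,T,U,V) as explicit
   parameters, even if some component is unused. *)
Definition Wc (S T U V : subcat) : subcat := capS U T.
Definition Cplus (S T U V : subcat) : subcat := star (Wc S T U V) (shift_sub V).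
Definition Cminus (S T U V : subcat) : subcat := star (unshift_sub S) (Wc S T U V).
Definition Hc (S T U V : subcat) : subcat := capS (Cplus S T U V) (Cminus S T U V).

(* morphisms factoring through an object of W (the ideal quotiented out in C/W) *)
Definition factorsW (S T U V : subcat) X Y (f : Mor X Y) : Prop :=
  exists W0 (g : Mor X W0) (h : Mor W0 Y), Wc S T U V W0 /\ f = comp h g.

Definition eqW (S T U V : subcat) X Y (f g : Mor X Y) : Prop :=
  factorsW S T U V (f - g).

Definition isoW (S T U V : subcat) (X Y : Obj C) : Prop :=
  exists (f : Mor X Y) (g : Mor Y X),
    eqW S T U V (comp g f) (idm X) /\ eqW S T U V (comp f g) (idm Y).

(* (X', eta) is a value tau^+(X) of the left adjoint of the inclusion
   C^+/W -> C/W at X, i.e. a reflection of X into C^+/W *)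
Definition tau_plus_of (S T U V : subcat) (X X' : Obj C) (eta : Mor X X') : Prop :=
  Cplus S T U V X' /\
  forall Y, Cplus S T U V Y ->
    (forall g : Mor X Y, exists h : Mor X' Y, eqW S T U V (comp h eta) g) /\
    (forall h1 h2 : Mor X' Y,
        eqW S T U V (comp h1 eta) (comp h2 eta) -> eqW S T U V h1 h2).

(* (Y', eps) is a value tau^-(Y) of the right adjoint of the inclusion
   C^-/W -> C/W at Y, i.e. a coreflection of Y into C^-/W *)
Definition tau_minus_of (S T U V : subcat) (Y Y' : Obj C) (eps : Mor Y' Y) : Prop :=
  Cminus S T U V Y' /\
  forall Z, Cminus S T U V Z ->
    (forall g : Mor Z Y, exists h : Mor Z Y', eqW S T U V (comp eps h) g) /\
    (forall h1 h2 : Mor Z Y',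
        eqW S T U V (comp eps h1) (comp eps h2) -> eqW S T U V h1 h2).
End Defs.

(* A reflection of any object X into C^+/W can be built by hand.  Take the
   (U,V)-triangle U_X -> X -> V_X[1] and an (S[-1],W)-triangle
   F -> U_X -> W_X, which exists because U lies in C^-.  By the octahedral
   axiom the cone Z of the composite F -> X sits in a triangle
   W_X -> Z -> V_X[1], so Z lies in C^+; and X -> Z is a reflection because
   maps from F and U_X into objects of C^+ are controlled by the vanishing of
   Hom(S, T[1]), Hom(S, V[1]) and Hom(U, V[1]).  When X is in C^-, a second
   octahedron, on the triangle exhibiting this, puts Z in C^- too, hence in H.
   Reflections are unique up to isomorphism in C/W, so tau^+(X) is isomorphic
   to Z.  The statement for tau^- is dual. *)
From mathcomp Require Import all_boot all_algebra.
Set Implicit Arguments. Unset Strict Implicit. Unset Printing Implicit Defensive.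
Import GRing.Theory.
Local Open Scope ring_scope.

Section Preadditive.
Variable C : TriCat.
Implicit Types X Y Z : Obj C.

Lemma comp0m X Y Z (f : Mor X Y) : comp (0 : Mor Y Z) f = 0.
Proof. by apply: (addrI (comp (0 : Mor Y Z) f)); rewrite -compDl !addr0. Qed.

Lemma compm0 X Y Z (g : Mor Y Z) : comp g (0 : Mor X Y) = 0.
Proof. by apply: (addrI (comp g (0 : Mor X Y))); rewrite -compDr !addr0. Qed.

Lemma compNl X Y Z (g : Mor Y Z) (f : Mor X Y) : comp (- g) f = - comp g f.
Proof. by apply/eqP; rewrite -addr_eq0 -compDl addNr comp0m. Qed.

Lemma compNr X Y Z (g : Mor Y Z) (f : Mor X Y) : comp g (- f) = - comp g f.
Proof. by apply/eqP; rewrite -addr_eq0 -compDr addNr compm0. Qed.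

Lemma compBl X Y Z (g1 g2 : Mor Y Z) (f : Mor X Y) :
  comp (g1 - g2) f = comp g1 f - comp g2 f.
Proof. by rewrite compDl compNl. Qed.

Lemma compBr X Y Z (g : Mor Y Z) (f1 f2 : Mor X Y) :
  comp g (f1 - f2) = comp g f1 - comp g f2.
Proof. by rewrite compDr compNr. Qed.

Lemma shiftH0 X Y : shiftH (0 : Mor X Y) = 0.
Proof. by apply: (addrI (shiftH (0 : Mor X Y))); rewrite -shiftH_add !addr0. Qed.

Lemma shiftHN X Y (f : Mor X Y) : shiftH (- f) = - shiftH f.
Proof. by apply/eqP; rewrite -addr_eq0 -shiftH_add addNr shiftH0. Qed.

Lemma shiftH_eq0 X Y (f : Mor X Y) : shiftH f = 0 -> f = 0.
Proof. by move=> f0; apply: shiftH_inj; rewrite f0 shiftH0. Qed.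

Lemma bip_ext X Y Z (g1 g2 : Mor Z (bip X Y)) :
  comp (bpr1 X Y) g1 = comp (bpr1 X Y) g2 ->
  comp (bpr2 X Y) g1 = comp (bpr2 X Y) g2 -> g1 = g2.
Proof.
move=> E1 E2.
by rewrite -(comp1m g1) -(comp1m g2) -(bip_id X Y) !compDl -!compA E1 E2.
Qed.

Lemma comp_bip X Y Z P (s : Mor X Z) (t : Mor Y Z) (a : Mor P X) (b : Mor P Y) :
  comp (comp s (bpr1 X Y) + comp t (bpr2 X Y)) (comp (bin1 X Y) a + comp (bin2 X Y) b)
  = comp s a + comp t b.
Proof.
rewrite compDl !compDr -!compA ![comp (bpr1 X Y) (comp _ _)]compA.
rewrite ![comp (bpr2 X Y) (comp _ _)]compA bip_11 bip_12 bip_21 bip_22.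
by rewrite !comp0m !compm0 !comp1m addr0 add0r.
Qed.

Definition hom0 X Y := forall f : Mor X Y, f = 0.

Lemma is_iso_refl X : is_iso X X.
Proof. by exists (idm X), (idm X); rewrite comp1m. Qed.

Lemma hom0_iso X Y X0 Y0 : hom0 X0 Y0 -> is_iso X X0 -> is_iso Y Y0 -> hom0 X Y.
Proof.
move=> H0 [p [p' [pp' _]]] [q [q' [qq' _]]] f.
have -> : f = comp q' (comp (comp (comp q f) p') p).
  by rewrite -!compA pp' compm1 compA qq' comp1m.
by rewrite (H0 (comp (comp q f) p')) comp0m compm0.
Qed.

Lemma hom0_unshift X Y X1 : hom0 X1 (shift Y) -> is_iso (shift X) X1 -> hom0 X Y.
Proof. by move=> H0 iso f; apply/shiftH_eq0/(hom0_iso H0 iso (is_iso_refl _)). Qed.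

End Preadditive.

Section Triangles.
Variable C : TriCat.
Implicit Types X Y Z : Obj C.

Lemma dist_iso3 X Y Z Z' (u : Mor X Y) (v : Mor Y Z) (w : Mor Z (shift X))
    (c : Mor Z Z') (c' : Mor Z' Z) :
  comp c' c = idm Z -> comp c c' = idm Z' -> dist u v w -> dist u (comp c v) (comp w c').
Proof.
move=> c'c cc'.
apply: (dist_iso (a := idm X) (a' := idm X) (b := idm Y) (b' := idm Y) (c := c) (c' := c'));
  rewrite ?comp1m ?compm1 ?shiftH_id ?comp1m //.
by rewrite -compA c'c compm1.
Qed.

Lemma dist_iso2 X Y Z Y' (u : Mor X Y) (v : Mor Y Z) (w : Mor Z (shift X))
    (b : Mor Y Y') (b' : Mor Y' Y) :
  comp b' b = idm Y -> comp b b' = idm Y' -> dist u v w -> dist (comp b u) (comp v b') w.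
Proof.
move=> b'b bb'.
apply: (dist_iso (a := idm X) (a' := idm X) (b := b) (b' := b') (c := idm Z) (c' := idm Z));
  rewrite ?comp1m ?compm1 ?shiftH_id ?comp1m //.
by rewrite -compA b'b compm1.
Qed.

Lemma dist_unrot X Y Z (u : Mor X Y) (v : Mor Y (shift Z)) (w : Mor (shift Z) (shift X))
    (x : Mor Z X) :
  dist u v w -> w = shiftH x -> dist (- x) u v.
Proof. by move=> D wx; apply/dist_rot; rewrite shiftHN opprK -wx. Qed.

Lemma dist_unshift X Y Z (a : Mor X Y) (b : Mor Y Z) (c : Mor Z (shift X)) :
  dist (shiftH a) (shiftH b) (shiftH c) -> dist (- a) (- b) (- c).
Proof. by move=> D; do 3!apply: dist_unrot (erefl _); exact: D. Qed.

Lemma dist_unrot_iso X Y Z Z0 (u : Mor X Y) (v : Mor Y Z) (w : Mor Z (shift X))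
    (p : Mor Z (shift Z0)) (p' : Mor (shift Z0) Z) :
  comp p' p = idm Z -> comp p p' = idm (shift Z0) ->
  dist u v w -> exists x : Mor Z0 X, dist x u (comp p v).
Proof.
move=> p'p pp' D.
have [x xE] := shiftH_surj (comp w p').
by exists (- x); apply: dist_unrot (dist_iso3 p'p pp' D) (esym xE).
Qed.

Lemma dist_comp0 X Y Z (u : Mor X Y) (v : Mor Y Z) (w : Mor Z (shift X)) :
  dist u v w -> comp v u = 0.
Proof.
move=> D; have [c [cE _]] := dist_morph (a := idm X) (b := u) (dist_idm X) D (erefl _).
by rewrite -cE compm0.
Qed.

Lemma dist_zobj_idm X : dist (0 : Mor (@zobj C) X) (idm X) (0 : Mor X (shift zobj)).
Proof.
have z0 : idm (@zobj C) = 0 by apply: zobj_init.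
have sz0 : idm (shift (@zobj C)) = 0 by rewrite -shiftH_id z0 shiftH0.
have D := dist_iso3 (c := 0 : Mor zobj (shift (@zobj C))) (c' := 0)
  (etrans (comp0m _ _) (esym z0)) (etrans (comp0m _ _) (esym sz0)) (dist_idm X).
rewrite comp0m compm0 in D.
by apply/dist_rot; rewrite shiftH0 oppr0.
Qed.

Lemma dist_wcoker X Y Z X0 (u : Mor X Y) (v : Mor Y Z) (w : Mor Z (shift X))
    (f : Mor Y X0) :
  dist u v w -> comp f u = 0 -> exists g : Mor Z X0, f = comp g v.
Proof.
move=> D fu0.
have [c [cE _]] := dist_morph (a := 0 : Mor X zobj) (b := f) D (dist_zobj_idm X0)
  (etrans fu0 (esym (compm0 _ _))).
by exists c; rewrite cE comp1m.
Qed.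

Lemma dist_wker X Y Z X0 (u : Mor X Y) (v : Mor Y Z) (w : Mor Z (shift X))
    (f : Mor X0 Y) :
  dist u v w -> comp v f = 0 -> exists g : Mor X0 X, f = comp u g.
Proof.
move=> D vf0.
have [c [_ cE]] := dist_morph (a := f) (b := 0 : Mor zobj Z)
  ((dist_rot _ _ _).1 (dist_idm X0)) ((dist_rot _ _ _).1 D)
  (etrans (compm0 _ _) (esym vf0)).
have [g gE] := shiftH_surj c.
exists g; apply: shiftH_inj.
move: cE; rewrite shiftH_id compNr compm1 compNl -gE -shiftH_comp.
by move/eqP; rewrite eqr_opp => /eqP.
Qed.

(* The split monomorphism [s] is completed to a triangle whose third map
   vanishes; the resulting short exact sequence splits. *)
Lemma split_mono_summand X Y (s : Mor X Y) (r : Mor Y X) :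
  comp r s = idm X -> exists K, is_iso Y (bip X K).
Proof.
move=> rs.
have [K [v [w D]]] := dist_ext s.
have Dr := (dist_rot _ _ _).1 D.
have w0 : w = 0.
  have := dist_comp0 ((dist_rot _ _ _).1 Dr).
  rewrite compNl => /eqP; rewrite oppr_eq0 => /eqP sw0.
  by rewrite -(comp1m w) -shiftH_id -rs shiftH_comp -compA sw0 compm0.
have [t tE] : exists t : Mor K Y, idm K = comp v t by apply: (dist_wker Dr); rewrite compm1.
have vs : comp v s = 0 := dist_comp0 D.
set r' := r - comp r (comp t v).
have r's : comp r' s = idm X by rewrite /r' compBl -!compA vs !compm0 subr0.
have r't : comp r' t = 0 by rewrite /r' compBl -!compA -tE compm1 subrr.
exists K, (comp (bin1 X K) r' + comp (bin2 X K) v), (comp s (bpr1 X K) + comp t (bpr2 X K)).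
split.
- set d := idm Y - (comp s r' + comp t v).
  have ds : comp d s = 0.
    by rewrite /d compBl comp1m compDl -!compA r's vs compm1 compm0 addr0 subrr.
  have [m mE] := dist_wcoker D ds.
  have dt : comp d t = 0.
    by rewrite /d compBl comp1m compDl -!compA r't -tE compm0 compm1 add0r subrr.
  have m0 : m = 0 by move: dt; rewrite mE -compA -tE compm1.
  have : d = 0 by rewrite mE m0 comp0m.
  by rewrite comp_bip /d => /eqP; rewrite subr_eq0 => /eqP <-.
- clearbody r'; apply: bip_ext; rewrite compm1 !(compDl, compDr) !compA.
  + by rewrite bip_11 bip_12 !comp1m !comp0m !addr0 r's r't comp1m comp0m addr0.
  + by rewrite bip_21 bip_22 !comp1m !comp0m !add0r vs -tE comp1m comp0m add0r.
Qed.

End Triangles.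

Section CotorsionPair.
Variable C : TriCat.
Variables A B : subcat C.
Hypothesis cpAB : cotorsion_pair A B.
Implicit Types X Y M : Obj C.

Lemma good_subcat_retract (P : subcat C) X Y (s : Mor X Y) (r : Mor Y X) :
  good_subcat P -> comp r s = idm X -> P Y -> P X.
Proof.
move=> [isoP [_ [_ summandP]]] rs PY.
have [K iso] := split_mono_summand rs.
by have [] := summandP _ _ (isoP _ _ iso PY).
Qed.

Lemma cotorsion_left_orth M : (forall Y, B Y -> hom0 M (shift Y)) -> A M.
Proof.
case: cpAB => [gA [_ [dec _]]] orthM.
have [X [Y [u [v [w [AX [[B1 [BB1 [p [p' [p'p _]]]]] D]]]]]]] := dec M.
have v0 : v = 0 by rewrite -(comp1m v) -p'p -compA (orthM _ BB1 (comp p v)) compm0.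
have [s sE] : exists s, idm M = comp u s by apply: (dist_wker D); rewrite v0 comp0m.
exact: good_subcat_retract gA (esym sE) AX.
Qed.

Lemma cotorsion_right_orth M : (forall X, A X -> hom0 X (shift M)) -> B M.
Proof.
case: cpAB => [_ [gB [dec _]]] orthM.
have [X [Y [u [v [w [AX [[B1 [BB1 [p [p' [p'p pp']]]]] D]]]]]]] := dec (shift M).
have [r rE] : exists r, idm (shift M) = comp r v.
  by apply: (dist_wcoker D); rewrite (orthM _ AX u) compm0.
have [s sE] := shiftH_surj (comp p v).
have [r0 r0E] := shiftH_surj (comp r p').
have r0s : comp r0 s = idm M.
  apply: shiftH_inj; rewrite shiftH_comp sE r0E shiftH_id.
  by rewrite -compA (compA p') p'p comp1m rE.
exact: good_subcat_retract gB r0s BB1.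
Qed.

Lemma cotorsion_unshift_star M : star (unshift_sub A) B M.
Proof.
case: cpAB => [_ [_ [dec _]]].
have [A1 [Q [s [t [r [AA1 [[B1 [BB1 [p [p' [p'p pp']]]]] D]]]]]]] := dec (shift M).
have [r0 r0E] := shiftH_surj (comp r p').
have [t0 t0E] := shiftH_surj (comp p t).
have [F [q [q' [q'q qq']]]] := shift_ess A1.
have [s0 s0E] := shiftH_surj (comp s q).
have D1 := dist_unrot (dist_unrot (dist_iso3 p'p pp' D) (esym r0E)) (esym t0E).
exists F, B1, (- s0), (- t0), (comp q' (- r0)); split; first by exists A1; split=> //; exists q, q'.
by split=> //; apply: dist_unrot (dist_iso3 qq' q'q D1) (esym s0E).
Qed.

End CotorsionPair.

Section TwinCotorsionPair.
Variable C : TriCat.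
Variables S T U V : subcat C.
Hypothesis twin : twin_cotorsion_pair S T U V.
Implicit Types X Y Z M : Obj C.

Let cpST : cotorsion_pair S T := twin.1.
Let cpUV : cotorsion_pair U V := twin.2.1.
Let orthSV X Y : S X -> V Y -> hom0 X (shift Y) := twin.2.2 X Y.
Let orthST X Y : S X -> T Y -> hom0 X (shift Y) := cpST.2.2.2 X Y.
Let orthUV X Y : U X -> V Y -> hom0 X (shift Y) := cpUV.2.2.2 X Y.

Notation W := (Wc S T U V).
Notation factorsW := (factorsW S T U V).
Notation eqW := (eqW S T U V).
Notation Cplus := (Cplus S T U V).
Notation Cminus := (Cminus S T U V).

Lemma W_zobj : W zobj.
Proof. by split; [case: cpUV => [[_ []]] | case: cpST => [_ [[_ []]]]]. Qed.

Lemma W_bip X Y : W X -> W Y -> W (bip X Y).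
Proof.
case: cpUV cpST => [[_ [_ [bipU _]]] _] [_ [[_ [_ [bipT _]]] _]] [UX TX] [UY TY].
by split; [apply: bipU | apply: bipT].
Qed.

Lemma factorsW0 X Y : factorsW (0 : Mor X Y).
Proof. by exists zobj, 0, 0; split; [exact: W_zobj | rewrite compm0]. Qed.

Lemma factorsW_comp X Y W0 (a : Mor X W0) (b : Mor W0 Y) : W W0 -> factorsW (comp b a).
Proof. by move=> WW0; exists W0, a, b. Qed.

Lemma factorsW_add X Y (f g : Mor X Y) : factorsW f -> factorsW g -> factorsW (f + g).
Proof.
move=> [W1 [a1 [b1 [WW1 ->]]]] [W2 [a2 [b2 [WW2 ->]]]].
exists (bip W1 W2), (comp (bin1 W1 W2) a1 + comp (bin2 W1 W2) a2),
  (comp b1 (bpr1 W1 W2) + comp b2 (bpr2 W1 W2)).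
by split; [exact: W_bip | rewrite comp_bip].
Qed.

Lemma eqW_refl X Y (f : Mor X Y) : eqW f f.
Proof. by rewrite /eqW subrr; exact: factorsW0. Qed.

Lemma eqW_trans X Y (f g h : Mor X Y) : eqW f g -> eqW g h -> eqW f h.
Proof. by rewrite /eqW => fg gh; have := factorsW_add fg gh; rewrite addrA subrK. Qed.

Lemma eqW_compl X Y Z (f g : Mor X Y) (h : Mor Y Z) : eqW f g -> eqW (comp h f) (comp h g).
Proof. by rewrite /eqW -compBr => [[W1 [a [b [WW1 ->]]]]]; exists W1, a, (comp h b); rewrite compA. Qed.

Lemma eqW_compr X Y Z (f g : Mor X Y) (h : Mor Z X) : eqW f g -> eqW (comp f h) (comp g h).
Proof. by rewrite /eqW -compBl => [[W1 [a [b [WW1 ->]]]]]; exists W1, (comp a h), b; rewrite compA. Qed.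

Lemma U_sub_Cminus M : U M -> Cminus M.
Proof.
move=> UM.
have [F [T1 [s [t [r [[S1 [SS1 isoF]] [TT1 D]]]]]]] := cotorsion_unshift_star cpST M.
exists F, T1, s, t, r; split; first by exists S1.
split=> //; split=> //.
apply: (cotorsion_left_orth cpUV) => B VB f.
have [g ->] := dist_wcoker ((dist_rot _ _ _).1 D) (orthUV UM VB (comp f t)).
by rewrite (hom0_iso (orthSV SS1 VB) isoF (is_iso_refl _) g) comp0m.
Qed.

Lemma T_sub_Cplus M : T M -> Cplus M.
Proof.
move=> TM.
case: cpUV => [_ [_ [dec _]]].
have [U1 [Q [x [y [z [UU1 [[V1 [VV1 isoQ]] D]]]]]]] := dec M.
exists U1, Q, x, y, z; split; last by split; [exists V1 | exact: D].
split=> //; apply: (cotorsion_right_orth cpST) => A SA f.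
have [g ->] := dist_wker ((dist_rot _ _ _).1 ((dist_rot _ _ _).1 D)) (orthST SA TM (comp (- shiftH x) f)).
by rewrite (hom0_iso (orthSV SA VV1) (is_iso_refl _) isoQ g) compm0.
Qed.

Lemma star_unshiftS_U_sub_Cminus M : star (unshift_sub S) U M -> Cminus M.
Proof.
move=> [P [E [al [be [ga [[S0 [SS0 isoP]] [UE D]]]]]]].
have [F2 [T2 [sg [ta [rh [[S2 [SS2 isoF2]] [WT2 D2]]]]]]] := U_sub_Cminus UE.
have [G' [m2 [n2 D3]]] := dist_ext (comp ta be).
have [f [g [Do _]]] := dist_oct ((dist_rot _ _ _).1 D) ((dist_rot _ _ _).1 D2) D3.
have SG' : S G'.
  apply: (cotorsion_left_orth cpST) => B TB f1.
  have [g1 ->] := dist_wcoker Do (hom0_iso (orthST SS0 TB) isoP (is_iso_refl _) (comp f1 f)).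
  by rewrite (hom0_iso (orthST SS2 TB) isoF2 (is_iso_refl _) g1) comp0m.
have [G [p [p' [p'p pp']]]] := shift_ess G'.
have [x Dx] := dist_unrot_iso pp' p'p D3.
exists G, T2, x, (comp ta be), (comp p' m2).
by split; [exists G'; split=> //; exists p, p' | split].
Qed.

Lemma star_T_shiftV_sub_Cplus M : star T (shift_sub V) M -> Cplus M.
Proof.
move=> [E [Q [al [be [ga [TE [[VQ [VVQ isoQ]] D]]]]]]].
have [U2 [Q2 [x2 [y2 [z2 [WU2 [[V2 [VV2 isoQ2]] D2]]]]]]] := T_sub_Cplus TE.
have [N4 [m4 [n4 D3]]] := dist_ext (comp al x2).
have [f [g [Do _]]] := dist_oct D2 D D3.
have [V4 [p [p' [p'p pp']]]] := shift_ess N4.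
have VV4 : V V4.
  apply: (cotorsion_right_orth cpUV) => A UA f1.
  have [g1 g1E] := dist_wker Do (hom0_iso (orthUV UA VVQ) (is_iso_refl _) isoQ (comp g (comp p f1))).
  have g10 := hom0_iso (orthUV UA VV2) (is_iso_refl _) isoQ2 g1.
  by rewrite -(comp1m f1) -p'p -compA g1E g10 !compm0.
exists U2, N4, (comp al x2), m4, n4.
by split=> //; split; [exists V4; split=> //; exists p', p | exact: D3].
Qed.

Lemma tau_plus_triangle X :
  exists Z (m : Mor X Z) F (n : Mor Z (shift F)) UX (a : Mor UX X) (s : Mor F UX),
    dist (comp a s) m n /\ Cplus Z /\ U UX /\ unshift_sub S F.
Proof.
case: cpUV => [_ [_ [dec _]]].
have [UX [Q [a [b [c [UUX [VQ D]]]]]]] := dec X.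
have [F [T1 [s [t [r [SF [WT1 D1]]]]]]] := U_sub_Cminus UUX.
have [Z [m [n D3]]] := dist_ext (comp a s).
have [f [g [Do _]]] := dist_oct D1 D D3.
exists Z, m, F, n, UX, a, s; split=> //; split=> //.
by exists T1, Q, f, g, (comp (shiftH t) c).
Qed.

Lemma tau_plus_of_triangle X Z (m : Mor X Z) F (n : Mor Z (shift F)) UX
    (a : Mor UX X) (s : Mor F UX) :
  dist (comp a s) m n -> Cplus Z -> U UX -> unshift_sub S F -> tau_plus_of S T U V m.
Proof.
move=> D CZ UUX [S1 [SS1 isoF]].
split=> // Y [WY [QY [iY [jY [kY [WWY [[VY [VVY isoY]] DY]]]]]]]; split.
- move=> g.
  have [c cE] : exists c, comp g a = comp iY c.
    apply: (dist_wker DY); rewrite compA.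
    exact: (hom0_iso (orthUV UUX VVY) (is_iso_refl _) isoY).
  have [h ->] : exists h, g = comp h m.
    apply: (dist_wcoker D); rewrite compA cE -compA.
    by rewrite (hom0_unshift (orthST SS1 WWY.2) isoF (comp c s)) compm0.
  by exists h; exact: eqW_refl.
- move=> h1 h2 [W0 [al [be [WW0 hE]]]].
  have [al' alE] : exists al', al = comp al' m.
    by apply: (dist_wcoker D); exact: (hom0_unshift (orthST SS1 WW0.2) isoF).
  have k0 : comp (h1 - h2 - comp be al') m = 0.
    by rewrite !compBl hE -compA -alE subrr.
  have [e eE] := dist_wcoker ((dist_rot _ _ _).1 D) k0.
  have [e' e'E] : exists e', e = comp iY e'.
    by apply: (dist_wker DY); exact: (hom0_iso (orthSV SS1 VVY) isoF isoY).
  rewrite /eqW -(subrK (comp be al') (h1 - h2)).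
  apply: factorsW_add; last exact: factorsW_comp WW0.
  by rewrite eE e'E -compA; apply: factorsW_comp WWY.
Qed.

Lemma Cminus_cone_unshiftS X Z F (u : Mor F X) (m : Mor X Z) (n : Mor Z (shift F)) :
  dist u m n -> unshift_sub S F -> Cminus X -> Cminus Z.
Proof.
move=> D [S1 [SS1 isoF]] [P [W0 [p [q [r [SP [WW0 DX]]]]]]].
apply: star_unshiftS_U_sub_Cminus.
have [E [m' [n' D3]]] := dist_ext (comp m p).
have [f [g [Do _]]] := dist_oct DX ((dist_rot _ _ _).1 D) D3.
exists P, E, (comp m p), m', n'; split=> //; split=> //.
apply: (cotorsion_left_orth cpUV) => B VB f1.
have [g1 ->] := dist_wcoker Do (orthUV WW0.1 VB (comp f1 f)).
by rewrite (hom0_iso (orthSV SS1 VB) isoF (is_iso_refl _) g1) comp0m.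
Qed.

Lemma tau_minus_triangle Y :
  exists Z (e : Mor Z Y) T0 (g : Mor Y T0) Q (y : Mor T0 Q) (w : Mor Q (shift Z)),
    dist e (comp y g) w /\ Cminus Z /\ T T0 /\ shift_sub V Q.
Proof.
have [F [T0 [f [g [h [SF [TT0 D1]]]]]]] := cotorsion_unshift_star cpST Y.
have [U1 [Q [x [y [z [WU1 [VQ D2]]]]]]] := T_sub_Cplus TT0.
have [N [m [n D3]]] := dist_ext (comp y g).
have [f0 [g0 [Do _]]] := dist_oct ((dist_rot _ _ _).1 D1) ((dist_rot _ _ _).1 D2) D3.
have [Z [p [p' [p'p pp']]]] := shift_ess N.
have [e De] := dist_unrot_iso pp' p'p D3.
exists Z, e, T0, g, Q, y, (comp p' m); split=> //; split=> //.
have [a aE] := shiftH_surj (comp p' f0).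
have [b bE] := shiftH_surj (comp g0 p).
have [c cE] := shiftH_surj (comp (shiftH h) (- shiftH x)).
have Dt := dist_iso2 pp' p'p Do; rewrite -aE -bE -cE in Dt.
by exists F, U1, (- a), (- b), (- c); split=> //; split=> //; exact: dist_unshift.
Qed.

Lemma tau_minus_of_triangle Y Z (e : Mor Z Y) T0 (g : Mor Y T0) Q (y : Mor T0 Q)
    (w : Mor Q (shift Z)) :
  dist e (comp y g) w -> Cminus Z -> T T0 -> shift_sub V Q -> tau_minus_of S T U V e.
Proof.
move=> D CZ TT0 [V1 [VV1 isoQ]].
split=> // Z0 [P [W0 [p [q [r [[S0 [SS0 isoP]] [WW0 D0]]]]]]]; split.
- move=> g1.
  have [c cE] : exists c, comp g g1 = comp c q.
    apply: (dist_wcoker D0); rewrite -compA.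
    exact: (hom0_unshift (orthST SS0 TT0) isoP).
  have [h ->] : exists h, g1 = comp e h.
    apply: (dist_wker D); rewrite -compA cE compA.
    by rewrite (hom0_iso (orthUV WW0.1 VV1) (is_iso_refl _) isoQ (comp y c)) comp0m.
  by exists h; exact: eqW_refl.
- move=> h1 h2 [W1 [al [be [WW1 hE]]]].
  have [be' beE] : exists be', be = comp e be'.
    by apply: (dist_wker D); exact: (hom0_iso (orthUV WW1.1 VV1) (is_iso_refl _) isoQ).
  have k0 : comp e (h1 - h2 - comp be' al) = 0.
    by rewrite !compBr hE compA -beE subrr.
  case: isoQ => [ph [ph' [ph'ph phph']]].
  have [x Dx] := dist_unrot_iso ph'ph phph' D.
  have [k kE] := dist_wker Dx k0.
  have [k' k'E] : exists k', k = comp k' q.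
    by apply: (dist_wcoker D0); exact: (hom0_unshift (orthSV SS0 VV1) isoP).
  rewrite /eqW -(subrK (comp be' al) (h1 - h2)).
  apply: factorsW_add; last exact: factorsW_comp WW1.
  by rewrite kE k'E compA; apply: factorsW_comp WW0.
Qed.

Lemma Cplus_cocone_shiftV Y Z Q (e : Mor Z Y) (v : Mor Y Q) (w : Mor Q (shift Z)) :
  dist e v w -> shift_sub V Q -> Cplus Y -> Cplus Z.
Proof.
move=> D [V1 [VV1 isoQ]] [W0 [QY [p [q [r [WW0 [[VY [VVY isoQY]] DY]]]]]]].
apply: star_T_shiftV_sub_Cplus.
have [N [m [n D3]]] := dist_ext (comp q e).
have [f [g [Do _]]] := dist_oct D ((dist_rot _ _ _).1 DY) D3.
have [E [p1 [p1' [p1'p1 p1p1']]]] := shift_ess N.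
have [x Dx] := dist_unrot_iso p1p1' p1'p1 D3.
exists E, QY, x, (comp q e), (comp p1' m); split; last by split; [exists VY | exact: Dx].
apply: (cotorsion_right_orth cpST) => A SA f1.
have [g1 g1E] := dist_wker Do (orthST SA WW0.2 (comp g (comp p1 f1))).
have g10 := hom0_iso (orthSV SA VV1) (is_iso_refl _) isoQ g1.
by rewrite -(comp1m f1) -p1'p1 -compA g1E g10 !compm0.
Qed.

Lemma tau_plus_of_unique X X1 X2 (e1 : Mor X X1) (e2 : Mor X X2) :
  tau_plus_of S T U V e1 -> tau_plus_of S T U V e2 -> isoW S T U V X1 X2.
Proof.
move=> [C1 H1] [C2 H2].
have [h he1] := (H1 X2 C2).1 e2.
have [k ke2] := (H2 X1 C1).1 e1.
exists h, k; split.
- apply: (H1 X1 C1).2; rewrite -compA comp1m.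
  exact: eqW_trans (eqW_compl k he1) ke2.
- apply: (H2 X2 C2).2; rewrite -compA comp1m.
  exact: eqW_trans (eqW_compl h ke2) he1.
Qed.

Lemma tau_minus_of_unique Y Y1 Y2 (e1 : Mor Y1 Y) (e2 : Mor Y2 Y) :
  tau_minus_of S T U V e1 -> tau_minus_of S T U V e2 -> isoW S T U V Y1 Y2.
Proof.
move=> [C1 H1] [C2 H2].
have [h e2h] := (H2 Y1 C1).1 e1.
have [k e1k] := (H1 Y2 C2).1 e2.
exists h, k; split.
- apply: (H1 Y1 C1).2; rewrite compA compm1.
  exact: eqW_trans (eqW_compr h e1k) e2h.
- apply: (H2 Y2 C2).2; rewrite compA compm1.
  exact: eqW_trans (eqW_compr k e2h) e1k.
Qed.

Lemma tau_plus_in_H X :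
  Cminus X -> exists Z (m : Mor X Z), tau_plus_of S T U V m /\ Hc S T U V Z.
Proof.
move=> CX.
have [Z [m [F [n [UX [a [s [D [CZ [UUX SF]]]]]]]]]] := tau_plus_triangle X.
exists Z, m; split; first exact: tau_plus_of_triangle D CZ UUX SF.
by split=> //; exact: Cminus_cone_unshiftS D SF CX.
Qed.

Lemma tau_minus_in_H Y :
  Cplus Y -> exists Z (e : Mor Z Y), tau_minus_of S T U V e /\ Hc S T U V Z.
Proof.
move=> CY.
have [Z [e [T0 [g [Q [y [w [D [CZ [TT0 VQ]]]]]]]]]] := tau_minus_triangle Y.
exists Z, e; split; first exact: tau_minus_of_triangle D CZ TT0 VQ.
by split=> //; exact: Cplus_cocone_shiftV D VQ CY.
Qed.

End TwinCotorsionPair.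

Theorem corollary2p15 (C : TriCat) (S T U V : subcat C) :
  twin_cotorsion_pair S T U V ->
  (forall (X X' : Obj C) (eta : Mor X X'),
     Cminus S T U V X -> tau_plus_of S T U V eta ->
     exists H0, Hc S T U V H0 /\ isoW S T U V X' H0) /\
  (forall (Y Y' : Obj C) (eps : Mor Y' Y),
     Cplus S T U V Y -> tau_minus_of S T U V eps ->
     exists H0, Hc S T U V H0 /\ isoW S T U V Y' H0).
Proof.
move=> twin; split.
- move=> X X' eta CX tau_eta.
  have [Z [m [tau_m HZ]]] := tau_plus_in_H twin CX.
  by exists Z; split=> //; exact: (tau_plus_of_unique twin tau_eta tau_m).
- move=> Y Y' eps CY tau_eps.
  have [Z [e [tau_e HZ]]] := tau_minus_in_H twin CY.
  by exists Z; split=> //; exact: (tau_minus_of_unique twin tau_eps tau_e).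
Qed.
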